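(* In the setting below, let $p,q\in X$ have the same support $S_p=S_q$ with $|S_p|>2$. If both $p$ and $q$ have strange indices, then these strange indices coincide.
   Context: Setting: $E=\{e_0,\dots,e_n\}\subset\mathbb R^n$ is the vertex set of an $n$-simplex with $e_0+\cdots+e_n=0$, and $X\subset\mathbb R^n\setminus\{0\}$ is a finite set with $E\subseteq X$, no element of $X$ a positive multiple of another, such that every $n+1$ points of $X$ are in good position. (A finite set $A$ is in conical position if $0\notin\operatorname{conv}A$ and no point of $A$ lies in the positive hull—set of nonnegative linear combinations—of the other points; it is in good position otherwise.) For $p\in X$, the support $S_p$ is the minimal subset of $E$ whose positive hull contains $p$; then $p=\sum_{e_i\in S_p}\lambda_ie_i$ uniquely with all $\lambda_i>0$. Convention: each $p\in X$ is replaced by the positive multiple for which $\min_{e_i\in S_p}\lambda_i=1$. An element $e_j\in S_p$ is a strange index of $p$ if $\lambda_j>1$ (under these hypotheses there is at most one). *)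

From HB Require Import structures.
From mathcomp Require Import all_boot all_order all_algebra.
Set Implicit Arguments. Unset Strict Implicit. Unset Printing Implicit Defensive.
Import Order.TTheory GRing.Theory Num.Theory.
Local Open Scope ring_scope.

Section Defs.
Variables (R : realFieldType) (n : nat).
Notation V := 'rV[R]_n.

Definition in_pos_hull (A : seq V) (v : V) : Prop :=
  exists c : V -> R, (forall a, 0 <= c a) /\ v = \sum_(a <- undup A) c a *: a.

Definition in_conv_hull (A : seq V) (v : V) : Prop :=
  exists c : V -> R, (forall a, 0 <= c a) /\ \sum_(a <- undup A) c a = 1 /\
                     v = \sum_(a <- undup A) c a *: a.

Definition conical_position (A : seq V) : Prop :=
  ~ in_conv_hull A 0 /\
  forall a, a \in A -> ~ in_pos_hull [seq b <- A | b != a] a.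

Definition good_position (A : seq V) : Prop := ~ conical_position A.

Definition affinely_independent (e : 'I_n.+1 -> V) : Prop :=
  forall c : 'I_n.+1 -> R, \sum_i c i = 0 -> \sum_i c i *: e i = 0 ->
    forall i, c i = 0.

Definition verts (e : 'I_n.+1 -> V) (S : {set 'I_n.+1}) : seq V :=
  [seq e i | i <- enum S].

Definition is_support (e : 'I_n.+1 -> V) (p : V) (S : {set 'I_n.+1}) : Prop :=
  in_pos_hull (verts e S) p /\
  forall S' : {set 'I_n.+1}, S' \proper S -> ~ in_pos_hull (verts e S') p.

Definition strange_index (e : 'I_n.+1 -> V) (p : V) (S : {set 'I_n.+1})
  (j : 'I_n.+1) : Prop :=
  j \in S /\
  exists (c : R) (lam : 'I_n.+1 -> R),
    [/\ 0 < c,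
        c *: p = \sum_(i in S) lam i *: e i,
        (forall i, i \in S -> 1 <= lam i),
        (exists2 i, i \in S & lam i = 1) &
        1 < lam j].

End Defs.

From HB Require Import structures.
From mathcomp Require Import all_boot all_order all_algebra.
From mathcomp Require Import lra ring.
Set Implicit Arguments. Unset Strict Implicit. Unset Printing Implicit Defensive.
Import Order.TTheory GRing.Theory Num.Theory.
Local Open Scope ring_scope.

(* Every contradiction below comes from n+1 points of X in conical position, which
   we certify with linear functionals v |-> fval u v: one functional positive on
   all the points, and for each point one that is negative on it and nonnegative
   on the others (conical_of_separation).  As e_0, ..., e_n is a simplex with
   barycentre 0, any weights w_0, ..., w_n with zero sum are the values of some
   functional on the vertices (functional_of_weights); our certificates are sparse
   weight vectors, evaluated on a point c p = sum_(i in S) lam_i e_i by point_value.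
   - If a normalized representation (minimal coordinate 1, attained at e_m) had two
     coordinates > 1, then {p} u E \ {e_m} would be conical (two_large_separated):
     a point has at most one strange index, all other coordinates being 1.
   - If p <> q have strange indices j <> k, take m in S \ {j, k} and t outside S
     (support_proper): then {p, q} u E \ {e_m, e_t} is conical
     (two_points_separated).
   - If p = q, normalized coordinates are unique (normalization_unique) and the
     first case applies. *)

Section Functionals.
Variables (R : realFieldType) (n : nat).

Definition fval (u : 'cV[R]_n) (v : 'rV[R]_n) : R := (v *m u) 0 0.

Lemma fvalZ u c v : fval u (c *: v) = c * fval u v.
Proof. by rewrite /fval -scalemxAl mxE. Qed.

Lemma fval_sum (I : Type) (r : seq I) (P : pred I) (F : I -> 'rV[R]_n) u :
  fval u (\sum_(i <- r | P i) F i) = \sum_(i <- r | P i) fval u (F i).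
Proof. by rewrite /fval mulmx_suml summxE. Qed.

Lemma fval_comb (I : Type) (r : seq I) (P : pred I) (c : I -> R)
    (F : I -> 'rV[R]_n) u :
  fval u (\sum_(i <- r | P i) c i *: F i) = \sum_(i <- r | P i) c i * fval u (F i).
Proof. by rewrite fval_sum; apply: eq_bigr => i _; rewrite fvalZ. Qed.

(* Separation by functionals certifies conical position: a functional positive on A
   keeps 0 out of conv A, and a functional negative on a but nonnegative on the
   other points keeps a out of their positive hull. *)
Lemma conical_of_separation (A : seq 'rV[R]_n) :
  (exists u, forall a, a \in A -> 0 < fval u a) ->
  (forall a, a \in A -> exists u, fval u a < 0 /\
     forall b, b \in A -> b != a -> 0 <= fval u b) ->
  conical_position A.
Proof.
move=> [u upos] sep; split.
  move=> [c [c0 [c1 sum0]]].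
  have /eqP : \sum_(a <- undup A) c a * fval u a = 0.
    by rewrite -fval_comb -sum0 /fval mul0mx mxE.
  rewrite big_seq psumr_eq0 => [/allP zero|a]; last first.
    by rewrite mem_undup => aA; rewrite mulr_ge0 // ltW // upos.
  suff : \sum_(a <- undup A) c a = 0 by rewrite c1 => /eqP; rewrite oner_eq0.
  rewrite big_seq big1 // => a aA; move/implyP: (zero a aA) => /(_ aA) /eqP.
  rewrite mem_undup in aA.
  by move/eqP; rewrite mulf_eq0 (gt_eqF (upos a aA)) orbF => /eqP.
move=> a aA [c [c0 arep]]; have [w [wa wge]] := sep a aA.
suff : 0 <= fval w a by rewrite leNgt wa.
rewrite arep fval_comb big_seq sumr_ge0 // => b.
rewrite mem_undup mem_filter => /andP [ba bA].
by rewrite mulr_ge0 // wge.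
Qed.

End Functionals.

Section Weights.
Variables (R : realFieldType) (n : nat).
Implicit Types (S : {set 'I_n.+1}) (y lam : 'I_n.+1 -> R).

Definition delta (a : 'I_n.+1) : 'I_n.+1 -> R := fun l => (l == a)%:R.

Definition sparse_weights (k al : R) (a : 'I_n.+1) (be : R) (b : 'I_n.+1)
    (ga : R) (c : 'I_n.+1) : 'I_n.+1 -> R :=
  fun l => k + al * delta a l + be * delta b l + ga * delta c l.

Definition supp_coord S lam : 'I_n.+1 -> R := fun l => if l \in S then lam l else 0.

Lemma pairing_delta y a : \sum_l y l * delta a l = y a.
Proof.
rewrite (bigD1 a) //= /delta eqxx mulr1 big1 ?addr0 // => l /negbTE ->.
by rewrite mulr0.
Qed.

Lemma pairing_sparse y k al a be b ga c :
  \sum_l y l * sparse_weights k al a be b ga c l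
  = k * \sum_l y l + al * y a + be * y b + ga * y c.
Proof.
rewrite (eq_bigr (fun l => k * y l + al * (y l * delta a l) + be * (y l * delta b l)
   + ga * (y l * delta c l))); last by move=> l _; rewrite /sparse_weights; ring.
by rewrite !big_split /= -!big_distrr /= !pairing_delta.
Qed.

Lemma sum_sparse k al a be b ga c :
  \sum_l sparse_weights k al a be b ga c l = k * n.+1%:R + al + be + ga.
Proof.
have := pairing_sparse (fun _ => 1) k al a be b ga c.
rewrite sumr_const card_ord !mulr1 mulr_natr => <-.
by apply: eq_bigr => l _; rewrite mul1r.
Qed.

Lemma sum_supp_coord S lam : \sum_l supp_coord S lam l = \sum_(i in S) lam i.
Proof. by rewrite [RHS]big_mkcond. Qed.

Lemma supp_coord_in S lam l : l \in S -> supp_coord S lam l = lam l.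
Proof. by rewrite /supp_coord => ->. Qed.

Lemma supp_coord_out S lam l : l \notin S -> supp_coord S lam l = 0.
Proof. by rewrite /supp_coord => /negbTE ->. Qed.

Lemma coord_le_sum S lam j : (forall i, i \in S -> 0 <= lam i) -> j \in S ->
  lam j <= \sum_(i in S) lam i.
Proof.
move=> lam0 jS; rewrite (bigD1 j) //= lerDl sumr_ge0 // => i /andP [iS _].
exact: lam0.
Qed.

End Weights.

Definition good_subsets (R : realFieldType) (n : nat) (X : seq 'rV[R]_n) : Prop :=
  forall A : seq 'rV[R]_n, uniq A -> size A = n.+1 -> {subset A <= X} ->
    good_position A.

Lemma exists_third (T : finType) (S : {set T}) (j k : T) : (2 < #|S|)%N ->
  exists2 m, m \in S & (m != j) && (m != k).
Proof.
move=> S2; have : (0 < #|S :\ j :\ k|)%N.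
  by move: S2; rewrite (cardsD1 j S) (cardsD1 k (S :\ j)); case: (j \in S);
     case: (k \in S :\ j); rewrite /= ?add0n ?add1n //; case: #|_|.
by rewrite card_gt0 => /set0Pn [m]; rewrite !in_setD1 => /and3P [mk mj mS]; exists m;
  rewrite // mj mk.
Qed.

Section Simplex.
Variables (R : realFieldType) (n : nat) (e : 'I_n.+1 -> 'rV[R]_n).
Hypothesis He_simplex : affinely_independent e.
Hypothesis He_sum : \sum_i e i = 0.
Implicit Types (p q : 'rV[R]_n) (S : {set 'I_n.+1}) (lam mu w : 'I_n.+1 -> R).
Implicit Types (P : seq 'rV[R]_n) (D : {set 'I_n.+1}).

(* The vertices e_1, ..., e_n form a basis: e_0 = - sum_(i > 0) e_i and the e_i are
   affinely independent. *)
Definition tail_matrix : 'M[R]_n := \matrix_(i < n) e (lift ord0 i).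

Lemma tail_matrix_free : row_free tail_matrix.
Proof.
apply: inj_row_free => v vE0.
set t := - (\sum_i v 0 i) / n.+1%:R.
set c := fun l : 'I_n.+1 => t + (if unlift ord0 l is Some i then v 0 i else 0).
have c_lift i : c (lift ord0 i) = t + v 0 i by rewrite /c liftK.
have c_ord0 : c ord0 = t by rewrite /c unlift_none addr0.
have csum : \sum_l c l = 0.
  rewrite big_split /= sumr_const card_ord big_ord_recl unlift_none add0r.
  under eq_bigr do rewrite liftK.
  by rewrite /t -[_ *+ _]mulr_natr divfK ?pnatr_eq0 // addrC subrr.
have cvec : \sum_l c l *: e l = 0.
  under eq_bigr do rewrite scalerDl.
  rewrite big_split /= -scaler_sumr He_sum scaler0 add0r big_ord_recl.
  rewrite unlift_none scale0r add0r -[RHS]vE0 mulmx_sum_row.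
  by apply: eq_bigr => i _; rewrite liftK rowK.
have c0 := @He_simplex c csum cvec.
apply/rowP => i; rewrite mxE.
by have := c0 (lift ord0 i); rewrite c_lift -c_ord0 c0 add0r.
Qed.

Lemma functional_of_weights (w : 'I_n.+1 -> R) : \sum_i w i = 0 ->
  exists u, forall i, fval u (e i) = w i.
Proof.
move=> wsum.
exists (pinvmx tail_matrix *m \col_i w (lift ord0 i)).
have tail i : fval (pinvmx tail_matrix *m \col_i w (lift ord0 i)) (e (lift ord0 i))
    = w (lift ord0 i).
  rewrite /fval -(rowK (fun i => e (lift ord0 i))) -/tail_matrix rowE mulmxA.
  by rewrite -(mulmxA _ tail_matrix) mulmxVp ?tail_matrix_free // mulmx1 -rowE !mxE.
move=> i; case: (unliftP ord0 i) => [j ->|->]; first exact: tail.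
have e0 : e ord0 = - \sum_(j < n) e (lift ord0 j).
  by apply/eqP; rewrite -addr_eq0 -big_ord_recl He_sum.
have w0 : w ord0 = - \sum_(j < n) w (lift ord0 j).
  by apply/eqP; rewrite -addr_eq0 -big_ord_recl wsum.
rewrite e0 w0 -scaleN1r fvalZ fval_sum mulN1r; congr (- _).
by apply: eq_bigr => j _; exact: tail.
Qed.

Lemma point_value u w p c S lam : (forall i, fval u (e i) = w i) ->
  c *: p = \sum_(i in S) lam i *: e i ->
  c * fval u p = \sum_l supp_coord S lam l * w l.
Proof.
move=> uw prep; rewrite -fvalZ prep fval_comb big_mkcond.
by apply: eq_bigr => l _; rewrite /supp_coord uw; case: ifP; rewrite ?mul0r.
Qed.

Lemma vertex_inj : injective e.
Proof.
move=> a b eab; case: (eqVneq a b) => // ab; exfalso.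
have [|u uw] := @functional_of_weights (sparse_weights 0 1 a (-1) b 0 b).
  by rewrite sum_sparse; ring.
have := uw a; rewrite eab uw /sparse_weights /delta !eqxx eq_sym (negbTE ab).
by rewrite !mulr0n !mulr1n; lra.
Qed.

Lemma point_below p c S lam m t : 0 < c -> c *: p = \sum_(i in S) lam i *: e i ->
  m \in S -> 0 < lam m -> t \notin S ->
  exists u, fval u p < 0 /\ forall i, i != m -> 0 <= fval u (e i).
Proof.
move=> c0 prep mS lm tS.
have [|u uw] := @functional_of_weights (sparse_weights 0 1 t (-1) m 0 m).
  by rewrite sum_sparse; ring.
exists u; split.
  rewrite -(pmulr_rlt0 _ c0) (point_value uw prep) pairing_sparse.
  by rewrite /supp_coord mS (negbTE tS); lra.
move=> i im; rewrite uw /sparse_weights /delta (negbTE im).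
by case: (i == t); rewrite ?mulr0n ?mulr1n; lra.
Qed.


Lemma pos_hull_verts S' (x : 'I_n.+1 -> R) : (forall i, i \in S' -> 0 <= x i) ->
  in_pos_hull (verts e S') (\sum_(i in S') x i *: e i).
Proof.
move=> x0; exists (fun a => \sum_(i in S' | e i == a) x i); split.
  by move=> a; apply: sumr_ge0 => i /andP [/x0].
have -> : undup (verts e S') = verts e S'.
  by apply: undup_id; rewrite map_inj_uniq ?enum_uniq //; exact: vertex_inj.
rewrite big_map big_enum /=; apply: eq_bigr => i iS; congr (_ *: _).
rewrite (eq_bigl (pred1 i)) ?big_pred1_eq // => l /=.
by apply/andP/eqP => [[_ /eqP /vertex_inj] | ->] //; rewrite iS.
Qed.

(* A point with a normalized representation on its support S cannot use every
   vertex: otherwise subtracting sum_i e_i = 0 drops a vertex from S. *)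
Lemma support_proper p S c lam : is_support e p S -> 0 < c ->
  c *: p = \sum_(i in S) lam i *: e i -> (forall i, i \in S -> 1 <= lam i) ->
  (exists2 m, m \in S & lam m = 1) -> exists t, t \notin S.
Proof.
move=> [_ minS] c0 prep lam1 [m mS lm].
case: (pickP (fun t => t \notin S)) => [t tS | full]; first by exists t.
have inS i : i \in S by move: (full i) => /= /negbFE.
have shift : p = \sum_(i in S :\ m) ((lam i - 1) / c) *: e i.
  have sumS : \sum_(i in S) e i = 0.
    by rewrite -[RHS]He_sum; apply: eq_bigl => i; rewrite inS.
  have drop_m : \sum_(i in S :\ m) (lam i - 1) *: e i = \sum_(i in S) lam i *: e i.
    rewrite [RHS](eq_bigr (fun i => (lam i - 1) *: e i + e i)); last first.
      by move=> i _; rewrite scalerBl scale1r subrK.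
    rewrite big_split /= sumS addr0 [RHS](bigD1 m) //= lm subrr scale0r add0r.
    by apply: eq_bigl => i; rewrite in_setD1 andbC.
  apply: (scalerI (lt0r_neq0 c0)); rewrite prep -drop_m scaler_sumr.
  by apply: eq_bigr => i _; rewrite scalerA mulrCA divff ?mulr1 // lt0r_neq0.
case: (minS (S :\ m) (properD1 mS)); rewrite shift; apply: pos_hull_verts.
move=> i /setD1P [_ /lam1 li]; rewrite divr_ge0 ?subr_ge0 //; exact: ltW.
Qed.

Lemma normalization_unique p S t c d lam mu : t \notin S -> 0 < c -> 0 < d ->
  c *: p = \sum_(i in S) lam i *: e i -> d *: p = \sum_(i in S) mu i *: e i ->
  (forall i, i \in S -> 1 <= lam i) -> (forall i, i \in S -> 1 <= mu i) ->
  (exists2 m, m \in S & lam m = 1) -> (exists2 m, m \in S & mu m = 1) ->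
  forall l, l \in S -> lam l = mu l.
Proof.
move=> tS c0 d0 prep qrep lam1 mu1 [m0 m0S lm0] [m1 m1S mm1].
have prop l : l \in S -> d * lam l = c * mu l.
  move=> lS; have [|u uw] := @functional_of_weights (sparse_weights 0 1 l (-1) t 0 t).
    by rewrite sum_sparse; ring.
  have := point_value uw prep; have := point_value uw qrep.
  rewrite !pairing_sparse /supp_coord lS (negbTE tS) => hq hp; nra.
have /lam1 := m1S; have /mu1 := m0S; have := prop m0 m0S; have := prop m1 m1S.
rewrite lm0 mm1 => h1 h0 g0 g1.
have cd : c = d by nra.
move=> l /prop; rewrite cd => /mulfI; apply; exact: lt0r_neq0.
Qed.

(* The points P together with the vertices e_i, i in D, admit the certificates of
   conical_of_separation. *)
Definition separated P D : Prop :=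
  [/\ exists u, (forall a, a \in P -> 0 < fval u a) /\
                (forall i, i \in D -> 0 < fval u (e i)),
      forall a, a \in P -> exists u,
        [/\ fval u a < 0, forall b, b \in P -> b != a -> 0 <= fval u b
          & forall i, i \in D -> 0 <= fval u (e i)]
    & forall i, i \in D -> exists u,
        [/\ fval u (e i) < 0, forall b, b \in P -> 0 <= fval u b
          & forall l, l \in D -> l != i -> 0 <= fval u (e l)]].

Lemma separated_uniq P D : uniq P -> separated P D -> uniq (P ++ map e (enum D)).
Proof.
move=> Pu [_ sepP _]; rewrite cat_uniq Pu map_inj_uniq ?enum_uniq;
  last exact: vertex_inj.
rewrite andbT; apply/hasPn => _ /mapP [i iD ->]; apply/negP => eiP.
have [u [neg _ vert]] := sepP _ eiP.
by move: (vert i); rewrite -mem_enum iD leNgt neg => /(_ isT).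
Qed.

Lemma separated_conical P D : separated P D -> conical_position (P ++ map e (enum D)).
Proof.
move=> [[u [posP posD]] sepP sepD]; apply: conical_of_separation.
  exists u => a; rewrite mem_cat => /orP [/posP // | /mapP [i]].
  by rewrite mem_enum => /posD + ->.
move=> a; rewrite mem_cat => /orP [aP | /mapP [i]]; last rewrite mem_enum.
  have [w [neg nonnegP nonnegD]] := sepP a aP; exists w; split => // b.
  by rewrite mem_cat => /orP [/nonnegP // | /mapP [l]]; rewrite mem_enum => /nonnegD + ->.
move=> iD ->; have [w [neg nonnegP nonnegD]] := sepD i iD; exists w; split => // b.
rewrite mem_cat => /orP [/nonnegP // | /mapP [l]]; rewrite mem_enum => lD -> eli.
by apply: nonnegD lD _; apply: contraNneq eli => ->.
Qed.

Lemma separated_not_good X P D : good_subsets X -> (forall i, e i \in X) ->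
  {subset P <= X} -> uniq P -> (size P + #|D| = n.+1)%N -> ~ separated P D.
Proof.
move=> good eX PX Pu size_PD sep; apply: (good _ (separated_uniq Pu sep)).
- by rewrite size_cat size_map -cardE.
- by move=> a; rewrite mem_cat => /orP [/PX // | /mapP [i _ ->]].
- exact: separated_conical.
Qed.

Section TwoLargeCoordinates.
Variables (p : 'rV[R]_n) (c : R) (S : {set 'I_n.+1}) (lam : 'I_n.+1 -> R).
Variables (m j k t : 'I_n.+1).
Hypotheses (c0 : 0 < c) (prep : c *: p = \sum_(i in S) lam i *: e i).
Hypotheses (lam1 : forall i, i \in S -> 1 <= lam i) (mS : m \in S) (lm : lam m = 1).
Hypotheses (jS : j \in S) (kS : k \in S) (jk : j != k).
Hypotheses (lj : 1 < lam j) (lk : 1 < lam k) (tS : t \notin S).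

(* Weights 1 on E \ {e_m}, boosted at j to compensate the weight at m on p. *)
Lemma two_large_positive : exists u,
  (forall a, a \in [:: p] -> 0 < fval u a) /\ (forall i, i \in [set~ m] -> 0 < fval u (e i)).
Proof.
set N : R := n.+1%:R.
have [M hM M0] : exists2 M, M * (lam j - 1) = N & 0 <= M.
  exists (N / (lam j - 1)); first by rewrite divfK // subr_eq0 gt_eqF.
  by rewrite divr_ge0 ?ler0n // subr_ge0 ltW.
have [|u uw] := functional_of_weights (w := sparse_weights 1 (- N - M) m M j 0 j).
  by rewrite sum_sparse -/N; ring.
exists u; split => [a | i].
  rewrite inE => /eqP ->; rewrite -(pmulr_rgt0 _ c0) (point_value uw prep).
  have := coord_le_sum (fun i iS => le_trans ler01 (lam1 iS)) jS.
  rewrite pairing_sparse sum_supp_coord /supp_coord mS jS lm.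
  have -> : M * lam j = N + M by rewrite -hM; ring.
  by have := lj; lra.
rewrite !inE => im; rewrite uw /sparse_weights /delta (negbTE im).
by case: (i == j); rewrite ?mulr0n ?mulr1n; lra.
Qed.

(* e_i is separated by a functional vanishing on p, built from a large coordinate
   s other than i. *)
Lemma two_large_vertex_sep i : i != m -> exists u,
  [/\ fval u (e i) < 0, forall b, b \in [:: p] -> 0 <= fval u b
    & forall l, l \in [set~ m] -> l != i -> 0 <= fval u (e l)].
Proof.
move=> im.
set s := if i == j then k else j.
have sS : s \in S by rewrite /s; case: ifP.
have ls : 1 < lam s by rewrite /s; case: ifP.
have si : s != i.
  by rewrite /s; case: ifP => [/eqP -> | /negbT]; rewrite eq_sym.
set ell := if i \in S then lam i else 1.
have ell1 : 1 <= ell by rewrite /ell; case: ifP => // /lam1.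
have [|u uw] := functional_of_weights
  (w := sparse_weights 0 (ell - 1) s (lam s - ell) m (- (lam s - 1)) i).
  by rewrite sum_sparse; ring.
exists u; split.
- rewrite uw /sparse_weights /delta eq_sym (negbTE si) (negbTE im) eqxx.
  by rewrite ?mulr0n ?mulr1n; lra.
- move=> b; rewrite inE => /eqP ->; rewrite -(pmulr_rge0 _ c0) (point_value uw prep).
  rewrite pairing_sparse /supp_coord sS mS lm -/ell.
  by case: ifP => iS; rewrite /ell iS; nra.
- move=> l; rewrite !inE => lm' li; rewrite uw /sparse_weights /delta.
  rewrite (negbTE lm') (negbTE li).
  by case: (l == s); rewrite ?mulr0n ?mulr1n; lra.
Qed.

Lemma two_large_separated : separated [:: p] [set~ m].
Proof.
split; [exact: two_large_positive | | by move=> i; rewrite !inE; exact: two_large_vertex_sep].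
move=> a; rewrite inE => /eqP ->.
have [|u [neg vert]] := point_below c0 prep mS _ tS.
  by rewrite lm ltr01.
exists u; split => // [b | i].
  by rewrite inE => /eqP ->; rewrite eqxx.
by rewrite !inE; exact: vert.
Qed.

End TwoLargeCoordinates.

Lemma separate_by_large_coord p q c d S lam mu j m t : 0 < c -> 0 < d ->
  c *: p = \sum_(i in S) lam i *: e i -> d *: q = \sum_(i in S) mu i *: e i ->
  t \notin S -> m \in S -> j \in S -> lam m = 1 -> mu m = 1 -> mu j = 1 ->
  1 < lam j -> exists u,
    [/\ fval u q < 0, 0 <= fval u p & forall i, i != m -> 0 <= fval u (e i)].
Proof.
move=> c0 d0 prep qrep tS mS jS lm mm mj lj.
have [|u uw] := functional_of_weights
  (w := sparse_weights 0 (lam j - 1) t (- lam j) m 1 j).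
  by rewrite sum_sparse; ring.
exists u; split.
- rewrite -(pmulr_rlt0 _ d0) (point_value uw qrep) pairing_sparse.
  by rewrite /supp_coord (negbTE tS) mS jS mm mj; lra.
- rewrite -(pmulr_rge0 _ c0) (point_value uw prep) pairing_sparse.
  by rewrite /supp_coord (negbTE tS) mS jS lm; lra.
- move=> i im; rewrite uw /sparse_weights /delta (negbTE im).
  by case: (i == t); case: (i == j); rewrite ?mulr0n ?mulr1n; lra.
Qed.

Section TwoPoints.
Variables (p q : 'rV[R]_n) (c d : R) (S : {set 'I_n.+1}) (lam mu : 'I_n.+1 -> R).
Variables (j k m t : 'I_n.+1).
Hypotheses (c0 : 0 < c) (prep : c *: p = \sum_(i in S) lam i *: e i).
Hypotheses (d0 : 0 < d) (qrep : d *: q = \sum_(i in S) mu i *: e i).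
Hypotheses (lam1 : forall i, i \in S -> 1 <= lam i) (mu1 : forall i, i \in S -> 1 <= mu i).
Hypotheses (lam_one : forall i, i \in S -> i != j -> lam i = 1).
Hypotheses (mu_one : forall i, i \in S -> i != k -> mu i = 1).
Hypotheses (jS : j \in S) (kS : k \in S) (jk : j != k) (lj : 1 < lam j) (mk : 1 < mu k).
Hypotheses (mS : m \in S) (mj : m != j) (mk' : m != k) (tS : t \notin S).

Let D := ~: [set m; t].

(* Weights 1 on every vertex except e_t. *)
Lemma two_points_positive : exists u,
  (forall a, a \in [:: p; q] -> 0 < fval u a) /\ (forall i, i \in D -> 0 < fval u (e i)).
Proof.
have [|u uw] := functional_of_weights (w := sparse_weights 1 (- n.+1%:R) t 0 t 0 t).
  by rewrite sum_sparse; ring.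
have sum_pos (c' : R) (v : 'rV[R]_n) (nu : 'I_n.+1 -> R) : 0 < c' ->
    c' *: v = \sum_(i in S) nu i *: e i -> (forall i, i \in S -> 1 <= nu i) ->
    0 < fval u v.
  move=> c'0 vrep nu1; rewrite -(pmulr_rgt0 _ c'0) (point_value uw vrep).
  rewrite pairing_sparse sum_supp_coord /supp_coord (negbTE tS) !mulr0 !addr0 mul1r.
  have := coord_le_sum (fun i iS => le_trans ler01 (nu1 i iS)) mS.
  by have := nu1 m mS; lra.
exists u; split => [a | i].
  by rewrite !inE => /orP [/eqP -> | /eqP ->]; [exact: sum_pos prep lam1 |
    exact: sum_pos qrep mu1].
rewrite !inE negb_or => /andP [_ it]; rewrite uw /sparse_weights /delta (negbTE it).
by rewrite !mulr0n; lra.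
Qed.

Lemma two_points_vertex_sep i : i \in D -> exists u,
  [/\ fval u (e i) < 0, forall b, b \in [:: p; q] -> 0 <= fval u b
    & forall l, l \in D -> l != i -> 0 <= fval u (e l)].
Proof.
rewrite !inE negb_or => /andP [im it].
set be := supp_coord S lam i + supp_coord S mu i.
have [|u uw] := functional_of_weights
  (w := sparse_weights 0 (1 - be) t be m (-1) i).
  by rewrite sum_sparse; ring.
have coord_ge0 (nu : 'I_n.+1 -> R) : (forall l, l \in S -> 1 <= nu l) -> 0 <= supp_coord S nu i.
  by move=> nu1; rewrite /supp_coord; case: ifP => // /nu1; apply: le_trans.
exists u; split.
- rewrite uw /sparse_weights /delta (negbTE im) (negbTE it) eqxx.
  by rewrite !mulr0n !mulr1n; lra.
- move=> b; rewrite !inE => /orP [/eqP -> | /eqP ->].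
    rewrite -(pmulr_rge0 _ c0) (point_value uw prep) pairing_sparse.
    have := coord_ge0 mu mu1; rewrite (supp_coord_out _ tS) (supp_coord_in _ mS) lam_one //.
    by rewrite /be; lra.
  rewrite -(pmulr_rge0 _ d0) (point_value uw qrep) pairing_sparse.
  have := coord_ge0 lam lam1; rewrite (supp_coord_out _ tS) (supp_coord_in _ mS) mu_one //.
  by rewrite /be; lra.
- move=> l; rewrite !inE negb_or => /andP [lm lt] li.
  rewrite uw /sparse_weights /delta (negbTE lm) (negbTE lt) (negbTE li).
  by rewrite !mulr0n; lra.
Qed.

(* p and q are separated using each other's large coordinate. *)
Lemma two_points_separated : p != q -> separated [:: p; q] D.
Proof.
move=> pq; split; [exact: two_points_positive | | exact: two_points_vertex_sep].
have vertD u : (forall i, i != m -> 0 <= fval u (e i)) ->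
    forall i, i \in D -> 0 <= fval u (e i).
  by move=> vert i; rewrite !inE negb_or => /andP [im _]; exact: vert.
have lk : lam k = 1 by rewrite lam_one // eq_sym.
have mj' : mu j = 1 by rewrite mu_one.
move=> a; rewrite !inE => /orP [/eqP -> | /eqP ->].
  have [u [neg nonneg /vertD vert]] := separate_by_large_coord d0 c0 qrep prep tS mS kS
    (mu_one mS mk') (lam_one mS mj) lk mk.
  by exists u; split => // b; rewrite !inE => /orP [/eqP -> | /eqP ->]; rewrite ?eqxx.
have [u [neg nonneg /vertD vert]] := separate_by_large_coord c0 d0 prep qrep tS mS jS
  (lam_one mS mj) (mu_one mS mk') mj' lj.
exists u; split => // b; rewrite !inE => /orP [/eqP -> | /eqP ->] //.
by rewrite eqxx.
Qed.

End TwoPoints.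

Section PointsOfX.
Variables (X : seq 'rV[R]_n).
Hypothesis HEX : forall i, e i \in X.
Hypothesis HXgood : good_subsets X.

Lemma at_most_one_large p c S lam m j k t : p \in X -> 0 < c ->
  c *: p = \sum_(i in S) lam i *: e i -> (forall i, i \in S -> 1 <= lam i) ->
  m \in S -> lam m = 1 -> j \in S -> k \in S -> 1 < lam j -> 1 < lam k ->
  t \notin S -> j = k.
Proof.
move=> pX c0 prep lam1 mS lm jS kS lj lk tS; apply/eqP; apply: contraT => jk.
have sep := two_large_separated c0 prep lam1 mS lm jS kS jk lj lk tS.
case: (separated_not_good HXgood HEX _ _ _ sep) => //.
- by move=> a; rewrite inE => /eqP ->.
- by rewrite cardsC1 card_ord.
Qed.

Lemma other_coords_one p c S lam m j t : p \in X -> 0 < c ->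
  c *: p = \sum_(i in S) lam i *: e i -> (forall i, i \in S -> 1 <= lam i) ->
  m \in S -> lam m = 1 -> j \in S -> 1 < lam j -> t \notin S ->
  forall i, i \in S -> i != j -> lam i = 1.
Proof.
move=> pX c0 prep lam1 mS lm jS lj tS i iS ij; apply/eqP; rewrite eq_le lam1 // andbT.
rewrite leNgt; apply: contra ij => li; apply/eqP.
exact: (at_most_one_large pX c0 prep lam1 mS lm iS jS li lj tS).
Qed.

Lemma strange_index_unique p S j k : p \in X -> is_support e p S ->
  strange_index e p S j -> strange_index e p S k -> j = k.
Proof.
move=> pX supp [jS [c [lam [c0 prep lam1 lam_min lj]]]].
move=> [kS [d [mu [d0 prep' mu1 mu_min mk]]]].
have [t tS] := support_proper supp c0 prep lam1 lam_min.
have lam_mu := normalization_unique tS c0 d0 prep prep' lam1 mu1 lam_min mu_min.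
have [m mS lm] := lam_min.
by apply: (at_most_one_large pX c0 prep lam1 mS lm jS kS lj _ tS); rewrite lam_mu.
Qed.

Lemma strange_indices_distinct_points p q S j k : p \in X -> q \in X -> p != q ->
  is_support e p S -> (2 < #|S|)%N ->
  strange_index e p S j -> strange_index e q S k -> j = k.
Proof.
move=> pX qX pq supp S2 [jS [c [lam [c0 prep lam1 lam_min lj]]]].
move=> [kS [d [mu [d0 qrep mu1 [m1 m1S mm1] mk]]]].
have [t tS] := support_proper supp c0 prep lam1 lam_min.
have [m0 m0S lm0] := lam_min.
have lam_one := other_coords_one pX c0 prep lam1 m0S lm0 jS lj tS.
have mu_one := other_coords_one qX d0 qrep mu1 m1S mm1 kS mk tS.
apply/eqP; apply: contraT => jk; exfalso.
have [m mS /andP [mj mk']] := exists_third j k S2.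
have mt : m != t by apply: contraNneq tS => <-.
apply: (separated_not_good HXgood HEX _ _ _ (two_points_separated c0 prep d0 qrep
  lam1 mu1 lam_one mu_one jS kS jk lj mk mS mj mk' tS pq)).
- by move=> a; rewrite !inE => /orP [/eqP -> | /eqP ->].
- by rewrite /= andbT inE.
- by have := cardsC [set m; t]; rewrite cards2 mt card_ord.
Qed.

End PointsOfX.

End Simplex.

Theorem proposition6p3 (R : realFieldType) (n : nat)
  (e : 'I_n.+1 -> 'rV[R]_n) (X : seq 'rV[R]_n)
  (He_simplex : affinely_independent e)
  (He_sum : \sum_i e i = 0)
  (HX0 : 0 \notin X)
  (HEX : forall i, e i \in X)
  (HXmult : forall x y, x \in X -> y \in X -> forall c : R, 0 < c ->
              x = c *: y -> x = y)
  (HXgood : forall A : seq 'rV[R]_n, uniq A -> size A = n.+1 ->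
              {subset A <= X} -> good_position A)
  (p q : 'rV[R]_n) (Hp : p \in X) (Hq : q \in X)
  (S : {set 'I_n.+1})
  (HSp : is_support e p S) (HSq : is_support e q S)
  (HS2 : (2 < #|S|)%N) :
  forall j k : 'I_n.+1,
    strange_index e p S j -> strange_index e q S k -> j = k.
Proof.
move=> j k; have [<- | pq] := eqVneq p q.
  exact: (strange_index_unique He_simplex He_sum HEX HXgood Hp HSp).
exact: (strange_indices_distinct_points He_simplex He_sum HEX HXgood Hp Hq pq HSp HS2).
Qed.
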